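(* Let $d\ge 1$, $T\ge 1$, let $\mathcal{X}\subseteq\mathbb{R}^d$ be a non-empty closed convex set, and let $0<\mu\le L$. Let $f_1,\dots,f_T:\mathcal{X}\to[0,\infty)$ be differentiable with $\frac{\mu}{2}\|y-x\|^2\le f_t(y)-f_t(x)-\langle\nabla f_t(x),y-x\rangle\le\frac{L}{2}\|y-x\|^2$ for all $t$ and $x,y\in\mathcal{X}$. Let $x_1,\dots,x_T$ be the iterates of the OMGD algorithm with $K=\lceil\frac{L+\mu}{2\mu}\ln4\rceil$ from a starting point $x_0\in\mathcal{X}$, and let $C_{\mathcal{A}_o}=\sum_{t=1}^T\big(f_t(x_t)+\|x_t-x_{t-1}\|\big)$. Then for any $\alpha>0$, $$C_{\mathcal{A}_o}\le\sum_{t=1}^T f_t(x_t^\star)+\frac{1}{2\alpha}\sum_{t=1}^T\|\nabla f_t(x_t^\star)\|^2+(L+\alpha)\big(\|x_1-x_1^\star\|^2+2\mathcal{P}_{2,T}^\star\big)+3\|x_1-x_1^\star\|+3\mathcal{P}_T^\star.$$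
   Context: $x_t^\star=\arg\min_{x\in\mathcal{X}}f_t(x)$, $\mathcal{P}_T^\star=\sum_{t=2}^T\|x_t^\star-x_{t-1}^\star\|$, $\mathcal{P}_{2,T}^\star=\sum_{t=2}^T\|x_t^\star-x_{t-1}^\star\|^2$. OMGD with parameter $K$: $x_1=x_0$; for $t=2,\dots,T$, $z_t^{(0)}=x_{t-1}$, $z_t^{(k)}=\Pi_{\mathcal{X}}\big(z_t^{(k-1)}-\frac1L\nabla f_{t-1}(z_t^{(k-1)})\big)$ ($k=1,\dots,K$), $x_t=z_t^{(K)}$, where $\Pi_{\mathcal{X}}$ is Euclidean projection onto $\mathcal{X}$. *)

From HB Require Import structures.
From mathcomp Require Import all_boot all_order all_algebra.
From mathcomp Require Import all_classical all_reals all_analysis.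
Set Implicit Arguments. Unset Strict Implicit. Unset Printing Implicit Defensive.
Import Order.TTheory GRing.Theory Num.Theory.
Import numFieldNormedType.Exports.
Local Open Scope classical_set_scope.
Local Open Scope ring_scope.

Section Defs.
Variables (R : realType) (d : nat).
Notation vec := 'rV[R]_d.

Definition dotv (u v : vec) : R := \sum_(i < d) u ord0 i * v ord0 i.
Definition enorm (u : vec) : R := Num.sqrt (dotv u u).

Definition grad (f : vec -> R) (x : vec) : vec :=
  \row_(i < d) ('d f x) (delta_mx ord0 i).

Definition is_proj (X : set vec) (z p : vec) : Prop :=
  X p /\ forall y, X y -> enorm (z - p) <= enorm (z - y).
Definition proj (X : set vec) (z : vec) : vec := xget 0 (is_proj X z).

Definition is_argmin (X : set vec) (f : vec -> R) (p : vec) : Prop :=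
  X p /\ forall y, X y -> f p <= f y.
Definition argmin (X : set vec) (f : vec -> R) : vec := xget 0 (is_argmin X f).

Definition omgd_step (X : set vec) (L : R) (g : vec -> R) (z : vec) : vec :=
  proj X (z - L^-1 *: grad g z).

(* OMGD iterates: x_0 = x0, x_1 = x0, x_t = (step for f_{t-1})^K (x_{t-1}) *)
Fixpoint omgd (X : set vec) (f : nat -> vec -> R) (L : R) (K : nat) (x0 : vec)
    (t : nat) : vec :=
  match t with
  | 0 => x0
  | m.+1 => if m is 0 then x0 else iter K (omgd_step X L (f m)) (omgd X f L K x0 m)
  end.

End Defs.

(* Each f_t is mu-strongly convex and L-smooth on X, so one projected gradient
   step of size 1/L multiplies the squared distance to the minimiser x*_t by
   at most (L - mu) / (L + mu) <= exp (-2 mu / (L + mu)); after K steps the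
   factor is below 1/4.  Hence ||x_(t+1) - x*_t|| <= ||x_t - x*_t|| / 2, and
   by the triangle inequality c_t := ||x_t - x*_t|| obeys
   c_t <= c_(t-1) / 2 + ||x*_t - x*_(t-1)|| and
   ||x_t - x_(t-1)|| <= 3 c_(t-1) / 2.  Summing the halving recursion for c_t
   and for c_t^2 bounds both by the path lengths, while smoothness and Young's
   inequality give f_t(x_t) <= f_t(x*_t) + ||grad f_t(x*_t)||^2 / (2 alpha)
   + (L + alpha) c_t^2 / 2. *)

From Pilot Require Import Defs.
From HB Require Import structures.
From mathcomp Require Import all_boot all_order all_algebra.
From mathcomp Require Import all_classical all_reals all_analysis.
From mathcomp Require Import ring lra.
Import Order.TTheory GRing.Theory Num.Theory.
Import numFieldNormedType.Exports.
Local Open Scope classical_set_scope.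
Local Open Scope ring_scope.

Set Implicit Arguments.
Unset Strict Implicit.
Unset Printing Implicit Defensive.

Section Euclidean.
Variables (R : realType) (d : nat).
Local Notation vec := 'rV[R]_d.
Implicit Types (u v w : vec) (a : R).

Lemma dotvC u v : dotv u v = dotv v u.
Proof. by apply: eq_bigr => i _; rewrite mulrC. Qed.

Lemma dotvDl u v w : dotv (u + v) w = dotv u w + dotv v w.
Proof. by rewrite /dotv -big_split; apply: eq_bigr => i _; rewrite mxE mulrDl. Qed.

Lemma dotvZl a u w : dotv (a *: u) w = a * dotv u w.
Proof. by rewrite /dotv mulr_sumr; apply: eq_bigr => i _; rewrite mxE mulrA. Qed.

Lemma dotvNl u w : dotv (- u) w = - dotv u w.
Proof. by rewrite -scaleN1r dotvZl mulN1r. Qed.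

Lemma dotvBl u v w : dotv (u - v) w = dotv u w - dotv v w.
Proof. by rewrite dotvDl dotvNl. Qed.

Lemma dotvDr u v w : dotv w (u + v) = dotv w u + dotv w v.
Proof. by rewrite dotvC dotvDl !(dotvC w). Qed.

Lemma dotvZr a u w : dotv w (a *: u) = a * dotv w u.
Proof. by rewrite dotvC dotvZl dotvC. Qed.

Lemma dotvNr u w : dotv w (- u) = - dotv w u.
Proof. by rewrite dotvC dotvNl dotvC. Qed.

Lemma dotvBr u v w : dotv w (u - v) = dotv w u - dotv w v.
Proof. by rewrite dotvDr dotvNr. Qed.

Lemma dotv0l w : dotv 0 w = 0.
Proof. by rewrite -(scale0r 0) dotvZl mul0r. Qed.

Lemma dotvv_ge0 u : 0 <= dotv u u.
Proof. by rewrite sumr_ge0 // => i _; rewrite -expr2 sqr_ge0. Qed.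

Lemma dotvv_eq0 u : (dotv u u == 0) = (u == 0).
Proof.
apply/idP/eqP => [|->]; last by rewrite dotv0l.
rewrite psumr_eq0 => [/allP u0|i _]; last by rewrite -expr2 sqr_ge0.
apply/rowP => i; rewrite mxE.
by have /implyP/(_ isT) := u0 _ (mem_index_enum i); rewrite -expr2 sqrf_eq0 => /eqP.
Qed.

Lemma enorm_ge0 u : 0 <= enorm u.
Proof. exact: sqrtr_ge0. Qed.

Lemma sqr_enorm u : enorm u ^+ 2 = dotv u u.
Proof. by rewrite sqr_sqrtr // dotvv_ge0. Qed.

Lemma enorm0 : enorm (0 : vec) = 0.
Proof. by rewrite /enorm dotv0l sqrtr0. Qed.

Lemma enormN u : enorm (- u) = enorm u.
Proof. by rewrite /enorm dotvNl dotvNr opprK. Qed.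

Lemma enorm_distC u v : enorm (u - v) = enorm (v - u).
Proof. by rewrite -enormN opprB. Qed.

Lemma young a u v : 2 * a * dotv u v <= dotv u u + a ^+ 2 * dotv v v.
Proof.
have := dotvv_ge0 (u - a *: v).
rewrite !(dotvBl, dotvBr, dotvZl, dotvZr) (dotvC v u); nra.
Qed.

Lemma cauchy_schwarz u v : dotv u v <= enorm u * enorm v.
Proof.
have [->|u0] := eqVneq u 0; first by rewrite dotv0l enorm0 mul0r.
have [->|v0] := eqVneq v 0; first by rewrite dotvC dotv0l enorm0 mulr0.
have enorm_gt0 w : w != 0 -> 0 < enorm w.
  by move=> w0; rewrite sqrtr_gt0 lt_neqAle eq_sym dotvv_eq0 w0 dotvv_ge0.
have [gu gv] := (enorm_gt0 _ u0, enorm_gt0 _ v0).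
(* Young's inequality with weight [|u| / |v|] balances its two terms. *)
have := young (enorm u / enorm v) u v; rewrite -!sqr_enorm.
have -> : enorm u ^+ 2 + (enorm u / enorm v) ^+ 2 * enorm v ^+ 2
    = 2 * (enorm u / enorm v) * (enorm u * enorm v) by field; rewrite gt_eqF.
by rewrite ler_pM2l // mulr_gt0 // divr_gt0.
Qed.

Lemma enormD u v : enorm (u + v) <= enorm u + enorm v.
Proof.
rewrite -(ler_pXn2r (isT : (0 < 2)%N)) ?nnegrE ?addr_ge0 ?enorm_ge0 //.
rewrite sqr_enorm dotvDl !dotvDr (dotvC v u) sqrrD !sqr_enorm.
by have := cauchy_schwarz u v; lra.
Qed.

Lemma enorm_triangle u v w : enorm (u - w) <= enorm (u - v) + enorm (v - w).
Proof. by have := enormD (u - v) (v - w); rewrite addrA subrK. Qed.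

(* [`|u|] is the sup norm that makes ['rV[R]_d] a normed space. *)
Lemma normr_le_enorm u : `|u| <= enorm u.
Proof.
rewrite (_ : `|u| = mx_norm u) // mx_normrE.
apply: bigmax_le => [|[i j] _ /=]; first exact: enorm_ge0.
rewrite (ord1 i) -(ler_pXn2r (isT : (0 < 2)%N)) ?nnegrE ?enorm_ge0 //.
rewrite sqr_enorm real_normK ?num_real // /dotv (bigD1 j) //= -expr2 lerDl.
by rewrite sumr_ge0 // => k _; rewrite -expr2 sqr_ge0.
Qed.

End Euclidean.

Section Minimizers.
Variables (R : realType) (d : nat).
Local Notation vec := 'rV[R]_d.
Implicit Types (X : set vec) (g : vec -> R).

Lemma dotv_continuous (F G : vec -> vec) : continuous F -> continuous G ->
  continuous (fun y => dotv (F y) (G y)).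
Proof.
have coord (H : vec -> vec) i : continuous H -> continuous (fun y => H y ord0 i).
  move=> cH y; apply: (@continuous_comp _ _ _ H (fun M : vec => M ord0 i)).
    exact: cH.
  exact: coord_continuous.
move=> cF cG; apply: (@continuous_big R _ +%R 0 xpredT (@add_continuous R^o) _ _
  (fun i y => F y ord0 i * G y ord0 i)) => i _ y.
exact: continuousM (coord _ _ cF y) (coord _ _ cG y).
Qed.

Lemma exists_argmin_coercive X g x0 r : 0 <= r -> closed X -> X x0 ->
  (forall x, X x -> {for x, continuous g}) ->
  (forall y, X y -> r < `|y - x0| -> g x0 <= g y) -> exists p, is_argmin X g p.
Proof.
move=> r0 cX Xx0 cg coer.
pose B := X `&` closed_ball_ Num.norm x0 r.
have Bx0 : B x0 by split; rewrite // /closed_ball_ /= subrr normr0.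
have cB : compact B.
  apply: bounded_closed_compact; last by apply: closedI => //; exact: closed_closed_ball_.
  exists (`|x0| + r); split; first by rewrite num_real.
  move=> M hM y [_ By]; apply/ltW/(le_lt_trans _ hM).
  rewrite -[y](subrKC x0) (le_trans (ler_normD _ _)) // lerD2l.
  by rewrite distrC.
have ctB : {within B, continuous g}.
  by apply: continuous_in_subspaceT => x; rewrite inE => -[Xx _]; exact: cg.
have [p /set_mem[Xp _] pmin] := compact_EVT_min (ex_intro _ x0 Bx0) cB ctB.
exists p; split => // y Xy.
have [yr|ry] := leP `|y - x0| r.
  by apply: pmin; rewrite inE; split; rewrite // /closed_ball_ /= distrC.
by apply: le_trans (coer y Xy ry); apply: pmin; rewrite inE.
Qed.

Lemma exists_argmin_of_growth X g x0 (w : vec) (m : R) : 0 < m -> closed X -> X x0 ->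
  (forall x, X x -> {for x, continuous g}) ->
  (forall y, X y -> dotv w (y - x0) + m * enorm (y - x0) ^+ 2 <= g y - g x0) ->
  exists p, is_argmin X g p.
Proof.
move=> m0 cX Xx0 cg grow.
apply: (@exists_argmin_coercive _ _ x0 (enorm w / m)) => // [|y Xy ry].
  by rewrite divr_ge0 ?enorm_ge0 ?ltW.
have e0 := enorm_ge0 (y - x0).
have we : enorm w <= m * enorm (y - x0).
  rewrite -ler_pdivrMl // mulrC; apply/ltW/(lt_le_trans ry).
  exact: normr_le_enorm.
have := cauchy_schwarz (- w) (y - x0); rewrite dotvNl enormN.
have := grow y Xy; rewrite -subr_ge0; nra.
Qed.

End Minimizers.

Lemma le0_of_le_scaled (R : realFieldType) (a b : R) :
  (forall s, 0 < s -> s < 1 -> a <= s * b) -> a <= 0.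
Proof.
move=> h; rewrite leNgt; apply/negP => a0.
have ab : 0 < a + `|b| by rewrite ltr_pwDl.
pose s := a / (2 * (a + `|b|)).
have s2 : s * (2 * (a + `|b|)) = a by rewrite divfK // gt_eqF ?mulr_gt0.
have s0 : 0 < s by rewrite divr_gt0 ?mulr_gt0.
have s1 : s < 1.
  by rewrite ltr_pdivrMr ?mulr_gt0 // mul1r; have := normr_ge0 b; lra.
have := h s s0 s1; have := ler_wpM2l (ltW s0) (ler_norm b); nra.
Qed.

Section Projection.
Variables (R : realType) (d : nat).
Local Notation vec := 'rV[R]_d.
Implicit Types (X : set vec) (z p y : vec).

Lemma convex_set_comb X y p (s : R) : convex_set X -> X y -> X p ->
  0 <= s -> s <= 1 -> X (s *: y + (1 - s) *: p).
Proof.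
move=> cX Xy Xp s0 s1.
by have := cX y p (Itv01 s0 s1); rewrite !inE => /(_ Xy Xp).
Qed.

Lemma is_proj_proj X z : closed X -> X !=set0 -> is_proj X z (Defs.proj X z).
Proof.
move=> cX [x0 Xx0]; apply: xgetPex.
have [p [Xp pmin]] : exists p, is_argmin X (fun y => dotv (z - y) (z - y)) p.
  apply: (@exists_argmin_of_growth _ _ _ _ x0 ((-2) *: (z - x0)) 1) => // [y _|y _].
    have cz : continuous (fun y : vec => z - y).
      by move=> v; apply: (@continuousB _ _ _ (cst z) id) => //; exact: cst_continuous.
    exact: dotv_continuous.
  have -> : z - y = (z - x0) - (y - x0) by rewrite opprB addrA subrK.
  move: (z - x0) (y - x0) => a b.
  by rewrite mul1r sqr_enorm !(dotvZl, dotvBl, dotvBr) (dotvC b a); lra.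
by exists p; split => // y Xy; apply: ler_wsqrtr; exact: pmin.
Qed.

Lemma is_proj_obtuse X z p y : convex_set X -> is_proj X z p -> X y ->
  dotv (z - p) (y - p) <= 0.
Proof.
move=> cX [Xp pmin] Xy; apply: (@le0_of_le_scaled _ _ (dotv (y - p) (y - p) / 2)).
move=> s s0 s1; have := pmin _ (convex_set_comb cX Xy Xp (ltW s0) (ltW s1)).
have -> : z - (s *: y + (1 - s) *: p) = (z - p) - s *: (y - p).
  by apply/rowP => i; rewrite !mxE; ring.
rewrite -(ler_pXn2r (isT : (0 < 2)%N)) ?nnegrE ?enorm_ge0 // !sqr_enorm.
have := dotvv_ge0 (y - p); move: (z - p) (y - p) => a b.
by rewrite !(dotvBl, dotvBr, dotvZl, dotvZr) (dotvC b a); nra.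
Qed.

End Projection.

Section StronglyConvex.
Variables (R : realType) (d : nat).
Local Notation vec := 'rV[R]_d.
Implicit Types (X : set vec) (f : vec -> R) (x y z p : vec).

Definition strongly_convex_on X (mu : R) f : Prop := forall x y, X x -> X y ->
  mu / 2 * enorm (y - x) ^+ 2 <= f y - f x - dotv (grad f x) (y - x).

Definition smooth_on X (L : R) f : Prop := forall x y, X x -> X y ->
  f y - f x - dotv (grad f x) (y - x) <= L / 2 * enorm (y - x) ^+ 2.

Lemma exists_argmin_strongly_convex X f (mu : R) x0 : 0 < mu -> closed X -> X x0 ->
  (forall x, X x -> differentiable f x) -> strongly_convex_on X mu f ->
  exists p, is_argmin X f p.
Proof.
move=> mu0 cX Xx0 df sc.
apply: (@exists_argmin_of_growth _ _ _ _ x0 (grad f x0) (mu / 2)) => // [|x Xx|y Xy].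
- by rewrite divr_gt0.
- exact/differentiable_continuous/df.
- by have := sc _ _ Xx0 Xy; lra.
Qed.

Lemma argmin_quadratic_growth X f (mu : R) p y : convex_set X ->
  strongly_convex_on X mu f -> is_argmin X f p -> X y ->
  mu / 2 * enorm (y - p) ^+ 2 <= f y - f p.
Proof.
move=> cX sc [Xp pmin] Xy; rewrite -subr_le0.
apply: (@le0_of_le_scaled _ _ (mu / 2 * enorm (y - p) ^+ 2)) => s s0 s1.
have Xw := convex_set_comb cX Xy Xp (ltW s0) (ltW s1).
set w := s *: y + (1 - s) *: p in Xw *.
have := sc _ _ Xw Xp; have := sc _ _ Xw Xy; have := pmin _ Xw.
have -> : p - w = (- s) *: (y - p) by apply/rowP => i; rewrite !mxE; ring.
have -> : y - w = (1 - s) *: (y - p) by apply/rowP => i; rewrite !mxE; ring.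
rewrite !sqr_enorm !(dotvZl, dotvZr).
move: (dotv (y - p) (y - p)) (dotv (grad f w) (y - p)) => vv gv pw hy hp.
(* Averaging the two lower bounds at [w] with weights [s] and [1 - s] cancels [gv]. *)
have avg : mu / 2 * vv * (s * (1 - s)) <= s * (f y - f p) by nra.
have : mu / 2 * vv * (1 - s) <= f y - f p by rewrite -(ler_pM2l s0); nra.
lra.
Qed.

Lemma smooth_le_young X (L alpha : R) f p x : 0 < alpha -> smooth_on X L f ->
  X p -> X x ->
  f x <= f p + (2 * alpha)^-1 * enorm (grad f p) ^+ 2
         + (L + alpha) / 2 * enorm (x - p) ^+ 2.
Proof.
move=> alpha0 sm Xp Xx; have := sm _ _ Xp Xx.
have := young alpha (grad f p) (x - p); rewrite !sqr_enorm.
set g := grad f p.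
move: (dotv g (x - p)) (dotv g g) (dotv (x - p) (x - p)) => gv gg vv hy hs.
have : gv <= (2 * alpha)^-1 * gg + alpha / 2 * vv.
  rewrite -(ler_pM2l (_ : 0 < 2 * alpha)) ?mulr_gt0 //.
  rewrite (_ : _ * (_ + _) = gg + alpha ^+ 2 * vv) //.
  by field; rewrite gt_eqF.
lra.
Qed.

End StronglyConvex.

Section Feasibility.
Variables (R : realType) (d : nat).
Local Notation vec := 'rV[R]_d.
Variable X : set vec.
Hypotheses (clX : closed X) (X0 : X !=set0).

Lemma omgd_step_in L f z : X (omgd_step X L f z).
Proof. by case: (is_proj_proj (z - L^-1 *: grad f z) clX X0). Qed.

Lemma iter_omgd_step_in L f K z : X z -> X (iter K (omgd_step X L f) z).
Proof. by move=> Xz; elim: K => //= K _; exact: omgd_step_in. Qed.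

Lemma omgd_in (F : nat -> vec -> R) L K x0 t : X x0 -> X (omgd X F L K x0 t).
Proof. by move=> Xx0; elim: t => [|[|t] IH] //=; exact: iter_omgd_step_in. Qed.

End Feasibility.

Section ProjectedGradient.
Variables (R : realType) (d : nat).
Local Notation vec := 'rV[R]_d.
Variables (X : set vec) (mu L : R) (f : vec -> R).
Hypotheses (cX : convex_set X) (clX : closed X) (X0 : X !=set0).
Hypotheses (mu0 : 0 < mu) (muL : mu <= L).
Hypotheses (sc : strongly_convex_on X mu f) (sm : smooth_on X L f).

Let L0 : 0 < L. Proof. exact: lt_le_trans mu0 muL. Qed.

Lemma proj_grad_step_le z p y : X z -> X y -> is_proj X (z - L^-1 *: grad f z) p ->
  f p - f y <= L * dotv (z - p) (p - y) + L / 2 * enorm (z - p) ^+ 2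
               - mu / 2 * enorm (z - y) ^+ 2.
Proof.
move=> Xz Xy pp; have Xp := pp.1.
have upper := sm Xz Xp; have lower := sc Xz Xy.
rewrite !(enorm_distC _ z) in upper lower.
set g := grad f z in pp upper lower *; set q := L^-1 *: g in pp.
have gpy : dotv g (p - y) <= L * dotv (z - p) (p - y).
  have -> : g = L *: q by rewrite scalerA divff ?gt_eqF ?scale1r.
  rewrite dotvZl ler_pM2l // -(opprB y p) !dotvNr lerN2 -subr_le0 -dotvBl.
  by rewrite addrAC; exact: is_proj_obtuse cX pp Xy.
have : dotv g (y - z) = dotv g (p - z) - dotv g (p - y).
  by rewrite -dotvBr; congr dotv; apply/rowP => i; rewrite !mxE; ring.
lra.
Qed.

Lemma omgd_step_contraction z xs : is_argmin X f xs -> X z ->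
  (L + mu) * enorm (omgd_step X L f z - xs) ^+ 2 <= (L - mu) * enorm (z - xs) ^+ 2.
Proof.
move=> xsP Xz; set p := omgd_step X L f z.
have pp : is_proj X (z - L^-1 *: grad f z) p := is_proj_proj _ clX X0.
have descent := proj_grad_step_le Xz xsP.1 pp.
have growth := argmin_quadratic_growth cX sc xsP pp.1.
have zxs : z - xs = (z - p) + (p - xs) by rewrite addrA subrK.
rewrite zxs in descent *; move: descent growth; rewrite !sqr_enorm.
move: (z - p) (p - xs) => a b.
(* [L <a, b> + L |a|^2 / 2 = L (|a + b|^2 - |b|^2) / 2] turns [descent] into the claim. *)
by rewrite dotvDl !dotvDr (dotvC b a); nra.
Qed.

Lemma iter_omgd_step_contraction K z xs : is_argmin X f xs -> X z ->
  enorm (iter K (omgd_step X L f) z - xs) ^+ 2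
    <= ((L - mu) / (L + mu)) ^+ K * enorm (z - xs) ^+ 2.
Proof.
move=> xsP Xz; elim: K => [|K IH] /=; first by rewrite mul1r.
have Lmu : 0 < L + mu by rewrite addr_gt0.
have rho0 : 0 <= (L - mu) / (L + mu) by rewrite divr_ge0 ?subr_ge0 // ltW.
rewrite [_ ^+ K.+1]exprS -mulrA; apply: le_trans (ler_wpM2l rho0 IH).
rewrite mulrAC ler_pdivlMr // mulrC.
exact: omgd_step_contraction xsP (iter_omgd_step_in clX X0 L f K Xz).
Qed.

Lemma iter_omgd_step_halves K z xs : ((L - mu) / (L + mu)) ^+ K <= 4^-1 ->
  is_argmin X f xs -> X z -> enorm (iter K (omgd_step X L f) z - xs) <= enorm (z - xs) / 2.
Proof.
move=> rhoK xsP Xz.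
rewrite -(ler_pXn2r (isT : (0 < 2)%N)) ?nnegrE ?divr_ge0 ?enorm_ge0 //.
apply: le_trans (iter_omgd_step_contraction K xsP Xz) _.
rewrite [X in _ <= X]expr_div_n [X in X <= _]mulrC ler_wpM2l ?sqr_ge0 //.
by rewrite -natrX; exact: rhoK.
Qed.

End ProjectedGradient.

Lemma absz_ceil_ge (R : archiFieldType) (a : R) : a <= (`|Num.ceil a|%N)%:R.
Proof. by rewrite natr_absz (le_trans (ceil_ge a)) // ler_int ler_norm. Qed.

Lemma contraction_factor_pow_le (R : realType) (mu L : R) (K : nat) : 0 < mu -> mu <= L ->
  (L + mu) / (2 * mu) * ln 4 <= K%:R -> ((L - mu) / (L + mu)) ^+ K <= 4^-1.
Proof.
move=> mu0 muL hK; have Lmu : 0 < L + mu by lra.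
set r := 2 * mu / (L + mu); have r0 : 0 < r by rewrite divr_gt0 ?mulr_gt0.
have rho_le : (L - mu) / (L + mu) <= expR (- r).
  by rewrite (_ : _ / _ = 1 + - r) ?expR_ge1Dx // /r; field; rewrite gt_eqF.
apply: le_trans (_ : expR (- r) ^+ K <= _).
  by rewrite lerXn2r ?nnegrE ?divr_ge0 ?subr_ge0 ?expR_ge0 // ltW.
have -> : (4 : R)^-1 = expR (- ln 4) by rewrite expRN lnK // posrE.
rewrite -expRM_natl ler_expR mulrN lerN2.
have -> : ln (4 : R) = (L + mu) / (2 * mu) * ln 4 * r.
  by rewrite /r; field; rewrite !gt_eqF.
by rewrite ler_wpM2r // ltW.
Qed.

Section TrackingSums.
Variable R : realFieldType.
Implicit Types (c e : nat -> R) (T : nat).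

Lemma sum_prev_addr c T : (1 <= T)%N ->
  \sum_(2 <= t < T.+1) c t.-1 + c T = \sum_(1 <= t < T.+1) c t.
Proof. by case: T => // T _; rewrite big_add1 /= [RHS]big_nat_recr. Qed.

Lemma sum_le_of_halving c e T : (1 <= T)%N -> 0 <= c T ->
  (forall t, (2 <= t <= T)%N -> c t <= c t.-1 / 2 + e t) ->
  \sum_(1 <= t < T.+1) c t <= 2 * c 1%N + 2 * \sum_(2 <= t < T.+1) e t.
Proof.
move=> T1 cT0 hc.
have step : \sum_(2 <= t < T.+1) c t
    <= (\sum_(2 <= t < T.+1) c t.-1) / 2 + \sum_(2 <= t < T.+1) e t.
  rewrite mulr_suml -big_split.
  by apply: ler_sum_nat => t; exact: hc.
have := sum_prev_addr c T1; rewrite [\sum_(1 <= t < T.+1) c t]big_ltn //; lra.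
Qed.

Lemma tracking_cost_le T (F Fs G m c e : nat -> R) (w k : R) :
  (1 <= T)%N -> 0 <= k -> (forall t, 0 <= c t) ->
  (forall t, (1 <= t <= T)%N -> F t <= Fs t + w * G t + k / 2 * c t ^+ 2) ->
  m 1%N = 0 -> (forall t, (2 <= t <= T)%N -> m t <= 3 / 2 * c t.-1) ->
  (forall t, (2 <= t <= T)%N -> c t <= c t.-1 / 2 + e t) ->
  \sum_(1 <= t < T.+1) (F t + m t)
    <= \sum_(1 <= t < T.+1) Fs t + w * \sum_(1 <= t < T.+1) G t
       + k * (c 1%N ^+ 2 + 2 * \sum_(2 <= t < T.+1) e t ^+ 2)
       + 3 * c 1%N + 3 * \sum_(2 <= t < T.+1) e t.
Proof.
move=> T1 k0 c0 hF m1 hm hc.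
have hc2 t : (2 <= t <= T)%N -> c t ^+ 2 <= c t.-1 ^+ 2 / 2 + 2 * e t ^+ 2.
  move=> ht; have := hc t ht; have := c0 t; have := c0 t.-1.
  have := sqr_ge0 (c t.-1 / 2 - e t); nra.
have Sc2 := sum_le_of_halving T1 (sqr_ge0 (c T)) hc2; rewrite -mulr_sumr in Sc2.
have Sc := sum_le_of_halving T1 (c0 T) hc.
have SF : \sum_(1 <= t < T.+1) F t <= \sum_(1 <= t < T.+1) Fs t
    + w * \sum_(1 <= t < T.+1) G t + k / 2 * \sum_(1 <= t < T.+1) c t ^+ 2.
  rewrite !mulr_sumr -!big_split.
  by apply: ler_sum_nat => t; exact: hF.
have Sm : \sum_(1 <= t < T.+1) m t <= 3 / 2 * \sum_(2 <= t < T.+1) c t.-1.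
  rewrite big_ltn // m1 add0r mulr_sumr.
  by apply: ler_sum_nat => t; exact: hm.
have := ler_wpM2l (divr_ge0 k0 (ler0n _ 2)) Sc2.
have := sum_prev_addr c T1; have := c0 T.
by rewrite big_split /=; lra.
Qed.

End TrackingSums.

Theorem lemma13 (R : realType) (d T : nat) (X : set 'rV[R]_d) (mu L : R)
  (f : nat -> 'rV[R]_d -> R) (x0 : 'rV[R]_d) :
  (1 <= d)%N -> (1 <= T)%N ->
  X !=set0 -> closed X -> convex_set X ->
  0 < mu -> mu <= L ->
  (forall t, (1 <= t <= T)%N -> forall x, X x -> 0 <= f t x) ->
  (forall t, (1 <= t <= T)%N -> forall x, X x -> differentiable (f t) x) ->
  (forall t, (1 <= t <= T)%N -> forall x y, X x -> X y ->
     mu / 2 * enorm (y - x) ^+ 2 <= f t y - f t x - dotv (grad (f t) x) (y - x)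
     /\ f t y - f t x - dotv (grad (f t) x) (y - x) <= L / 2 * enorm (y - x) ^+ 2) ->
  X x0 ->
  let K := `| Num.ceil ((L + mu) / (2 * mu) * ln 4) |%N in
  let x := omgd X f L K x0 in
  let xs := fun t => argmin X (f t) in
  let cost := \sum_(1 <= t < T.+1) (f t (x t) + enorm (x t - x t.-1)) in
  let P := \sum_(2 <= t < T.+1) enorm (xs t - xs t.-1) in
  let P2 := \sum_(2 <= t < T.+1) enorm (xs t - xs t.-1) ^+ 2 in
  forall alpha : R, 0 < alpha ->
  cost <= \sum_(1 <= t < T.+1) f t (xs t)
          + (2 * alpha)^-1 * \sum_(1 <= t < T.+1) enorm (grad (f t) (xs t)) ^+ 2
          + (L + alpha) * (enorm (x 1%N - xs 1%N) ^+ 2 + 2 * P2)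
          + 3 * enorm (x 1%N - xs 1%N) + 3 * P.
Proof.
move=> _ T1 X0 clX cX mu0 muL _ df hf Xx0 K x xs cost P P2 alpha alpha0.
have sc t (ht : (1 <= t <= T)%N) : strongly_convex_on X mu (f t).
  by move=> y z Xy Xz; case: (hf t ht y z Xy Xz).
have sm t (ht : (1 <= t <= T)%N) : smooth_on X L (f t).
  by move=> y z Xy Xz; case: (hf t ht y z Xy Xz).
have xsP t (ht : (1 <= t <= T)%N) : is_argmin X (f t) (xs t).
  by apply: xgetPex; exact: exists_argmin_strongly_convex mu0 clX Xx0 (df t ht) (sc t ht).
have Xx t : X (x t) := omgd_in clX X0 f L K t Xx0.
have rhoK : ((L - mu) / (L + mu)) ^+ K <= 4^-1.
  by apply: contraction_factor_pow_le mu0 muL _; exact: absz_ceil_ge.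
have track t : (0 < t)%N -> (t < T)%N ->
    enorm (x t.+1 - xs t) <= enorm (x t - xs t) / 2.
  case: t => // t _ ht; have ht' : (1 <= t.+1 <= T)%N by exact: ltnW.
  have -> : x t.+2 = iter K (omgd_step X L (f t.+1)) (x t.+1) by [].
  exact: (iter_omgd_step_halves cX clX X0 mu0 muL (sc _ ht') (sm _ ht') rhoK (xsP _ ht')).
apply: (tracking_cost_le (c := fun t => enorm (x t - xs t))) => //.
- by rewrite addr_ge0 // ltW // (lt_le_trans mu0).
- by move=> t; exact: enorm_ge0.
- by move=> t ht; exact: smooth_le_young alpha0 (sm t ht) (xsP t ht).1 (Xx t).
- by rewrite subrr enorm0.
- case=> // t /andP[t1 tT] /=; have := track t t1 tT.
  have := enorm_triangle (x t.+1) (xs t) (x t).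
  by rewrite [enorm (xs t - _)]enorm_distC; lra.
- case=> // t /andP[t1 tT] /=; have := track t t1 tT.
  have := enorm_triangle (x t.+1) (xs t) (xs t.+1).
  by rewrite [enorm (xs t - _)]enorm_distC; lra.
Qed.
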